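(* Assume Ostaszewski's $\clubsuit$-principle. Then for every natural number $n\geq 2$ there is an $\omega_1$-$n$-gap over $\omega$, i.e. an $n$-gap $(\mathcal{L}_i:i<n)$ of families of subsets of $\omega$ such that each $(\mathcal{L}_i,\subseteq^* )$ is order-isomorphic to $(\omega_1,<)$.
   Context: $A\subseteq^*B$ means $A\setminus B$ is finite. A tuple $(\mathcal{L}_i:i<n)$ of families of subsets of $\omega$ is a pregap if $L\cap L'$ is finite whenever $L\in\mathcal{L}_i$, $L'\in\mathcal{L}_j$, $i\neq j$; $c:n\to\mathscr{P}(\omega)$ separates it if $L\subseteq^*c(i)$ for all $i<n$ and $L\in\mathcal{L}_i$, and $\bigcap_{i<n}c(i)$ is finite; an $n$-gap is a pregap with no separating $c$. $\clubsuit$: there is a sequence $\langle C_\delta:\delta\in\mathrm{Lim}\rangle$ ($\mathrm{Lim}$ = nonzero countable limit ordinals) with $C_\delta\subseteq\delta$ of order type $\omega$ and $\sup C_\delta=\delta$ such that for every uncountable $S\subseteq\omega_1$ the set $\{\delta:C_\delta\subseteq S\}$ is stationary. *)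

From mathcomp Require Import all_boot.
From mathcomp Require Import boolp classical_sets cardinality.
Set Implicit Arguments. Unset Strict Implicit. Unset Printing Implicit Defensive.
Local Open Scope classical_set_scope.

(* (W, lt) is (isomorphic to) (omega_1, <): a strict well-order which is
   uncountable and all of whose proper initial segments are countable. *)
Record is_omega1 (W : Type) (lt : W -> W -> Prop) : Prop := {
  o1_irrefl : forall x, ~ lt x x;
  o1_trans  : forall x y z, lt x y -> lt y z -> lt x z;
  o1_total  : forall x y, lt x y \/ x = y \/ lt y x;
  o1_wf     : well_founded lt;
  o1_uncountable : ~ countable (@setT W);
  o1_segments_countable : forall a, countable [set x | lt x a] }.

Definition is_limit (W : Type) (lt : W -> W -> Prop) (d : W) : Prop :=
  (exists b, lt b d) /\ (forall b, lt b d -> exists g, lt b g /\ lt g d).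

Definition unbounded (W : Type) (lt : W -> W -> Prop) (C : set W) : Prop :=
  forall a, exists b, C b /\ lt a b.

Definition closed_set (W : Type) (lt : W -> W -> Prop) (C : set W) : Prop :=
  forall d, is_limit lt d ->
    (forall b, lt b d -> exists g, C g /\ lt b g /\ lt g d) -> C d.

Definition club (W : Type) (lt : W -> W -> Prop) (C : set W) : Prop :=
  closed_set lt C /\ unbounded lt C.

Definition stationary (W : Type) (lt : W -> W -> Prop) (S : set W) : Prop :=
  forall C, club lt C -> exists x, S x /\ C x.

Definition order_type_omega (W : Type) (lt : W -> W -> Prop) (C : set W) : Prop :=
  exists g : nat -> W, (forall m k, (m < k)%N -> lt (g m) (g k)) /\ C = range g.

Definition clubsuit (W : Type) (lt : W -> W -> Prop) : Prop :=
  exists Cseq : W -> set W,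
    (forall d, is_limit lt d ->
       [/\ Cseq d `<=` [set x | lt x d],
           order_type_omega lt (Cseq d) &
           (forall b, lt b d -> exists g, Cseq d g /\ lt b g)]) /\
    (forall S : set W, ~ countable S ->
       stationary lt [set d | is_limit lt d /\ Cseq d `<=` S]).

Definition subset_star (A B : set nat) : Prop := finite_set (A `\` B).

Definition pregap (n : nat) (L : 'I_n -> set (set nat)) : Prop :=
  forall (i j : 'I_n) (A B : set nat), i != j -> L i A -> L j B ->
    finite_set (A `&` B).

Definition separates (n : nat) (L : 'I_n -> set (set nat)) (c : 'I_n -> set nat) : Prop :=
  (forall (i : 'I_n) (A : set nat), L i A -> subset_star A (c i)) /\
  finite_set (\bigcap_(i in @setT 'I_n) c i).

Definition ngap (n : nat) (L : 'I_n -> set (set nat)) : Prop :=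
  pregap L /\ ~ exists c, separates L c.

Definition order_iso_star (W : Type) (lt : W -> W -> Prop) (F : set (set nat)) : Prop :=
  exists f : W -> set nat,
    (forall a, F (f a)) /\ (forall A, F A -> exists a, f a = A) /\
    (forall a b, (lt a b \/ a = b) <-> subset_star (f a) (f b)).

From mathcomp Require Import all_boot.
From mathcomp Require Import boolp classical_sets cardinality.
From mathcomp Require Import zify.
Set Implicit Arguments. Unset Strict Implicit. Unset Printing Implicit Defensive.
Local Open Scope classical_set_scope.

(* Recursion on omega_1 produces, for every a, sets A_a(j), j < n, that are
   strictly increasing in a modulo finite sets and almost disjoint across colours
   j, so that L_j = {A_a(j)} is an omega_1-chain and (L_j) is a pregap.  Each stage
   also carries traces T_a(r) <= A_a(r): T_a(0) is always infinite and, at a limit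
   whose ladder consists of (r-1)-fold limits, T_a(r) is infinite and assembled from
   points of the (r-1)-traces along the ladder.  If c separated the pregap, then by
   induction on r, using clubsuit and the pigeonhole principle, uncountably many
   r-fold limits a share a bound K beyond which T_a(r) lies in c_0 /\ ... /\ c_r;
   for r = n-1 this makes the intersection of all c_i infinite.
   A new stage keeps what its countably many predecessors had, made disjoint
   across colours, and adds points of an increasing sequence that avoids, at its
   k-th term, the first k predecessors; such points exist because all of them are
   almost disjoint from the room left by the largest one. *)

Lemma finite_natP (A : set nat) : finite_set A <-> exists K, forall x, A x -> (x < K)%N.
Proof.
split=> [/finite_seqP[s ->]|[K AK]]; last exact: (sub_finite_set AK (finite_II K)).
exists (\max_(y <- s) y).+1 => x /= xs; rewrite ltnS; exact: leq_bigmax_seq.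
Qed.

Lemma infinite_natP (A : set nat) :
  infinite_set A <-> forall K, exists2 x, A x & (K <= x)%N.
Proof.
split=> [infA K|big /finite_natP[K AK]]; last by have [x /AK] := big K; lia.
apply: contrapT => noK; apply/infA/finite_natP; exists K => x Ax.
by rewrite ltnNge; apply/negP => Kx; apply: noK; exists x.
Qed.

Lemma increasing_avoiding (B : nat -> set nat) : (forall k, infinite_set (~` B k)) ->
  exists xs : nat -> nat, (forall k, xs k < xs k.+1)%N /\ forall k, ~ B k (xs k).
Proof.
move=> infB; pose xs := fix xs k := if k is k'.+1
  then xget 0%N [set y | ~ B k y /\ (xs k' < y)%N] else xget 0%N (~` B 0%N).
have xsS k : ~ B k.+1 (xs k.+1) /\ (xs k < xs k.+1)%N.
  have [y By ky] := (infinite_natP _).1 (infB k.+1) (xs k).+1.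
  exact: (@xgetPex _ 0%N [set y | ~ B k.+1 y /\ (xs k < y)%N]) (ex_intro _ y (conj By ky)).
exists xs; split=> [k|[|k]]; [by case: (xsS k)| |by case: (xsS k)].
have [y By _] := (infinite_natP _).1 (infB 0%N) 0%N.
exact: (@xgetPex _ 0%N (~` B 0%N)) (ex_intro _ y By).
Qed.

Lemma countable_setU T (A B : set T) : countable A -> countable B -> countable (A `|` B).
Proof.
move=> cA cB; have : countable (\bigcup_(i in @setT bool) (if i then A else B)).
  by apply: bigcup_countable => // -[].
by apply: sub_countable; apply: subset_card_le => x [Ax|Bx]; [exists true|exists false].
Qed.

Lemma countable_enum T (S : set T) : countable S ->
  exists e : nat -> option T, forall x, S x <-> exists k, e k = Some x.
Proof.
move=> /countable_injP[f finj].
exists (fun k => if pselect (exists2 x, S x & f x = k) is left ex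
                 then Some (projT1 (cid2 ex)) else None) => x.
split=> [Sx|[k]]; last by case: pselect => // ex [<-]; case: (cid2 ex).
exists (f x); case: pselect => [ex|[]]; last by exists x.
case: (cid2 ex) => y Sy fy /=; congr Some; apply: finj => //; exact: mem_set.
Qed.

Definition prefix_range T (f : nat -> option T) (k : nat) : set T :=
  [set b | exists2 l, (l <= k)%N & f l = Some b].

Lemma finite_prefix_range T (f : nat -> option T) (t : T) k :
  finite_set (prefix_range f k).
Proof.
apply: (sub_finite_set _ (finite_image (fun l => odflt t (f l)) (finite_II k.+1))).
by move=> b [l lk fl]; exists l; rewrite /= ?fl.
Qed.

Lemma uncountable_pigeonhole T (U : set T) (V : nat -> set T) :
  ~ countable U -> U `<=` \bigcup_(K in setT) V K -> exists K, ~ countable (V K).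
Proof.
move=> uncU UV; apply: contrapT => allc; apply/uncU/(sub_countable (subset_card_le UV)).
by apply: bigcup_countable => // K _; apply: contrapT => ncK; apply: allc; exists K.
Qed.

Section StrictTotalOrder.
Variables (W : Type) (lt : W -> W -> Prop).
Hypotheses (lt_trans : forall x y z, lt x y -> lt y z -> lt x z)
           (lt_total : forall x y, lt x y \/ x = y \/ lt y x).

Lemma prefix_range_max (f : nat -> option W) k : prefix_range f k = set0 \/
  exists2 m, prefix_range f k m & forall b, prefix_range f k b -> b = m \/ lt b m.
Proof.
elim: k => [|k IH].
  case f0: (f 0%N) => [m|]; [right; exists m; first by exists 0%N|left].
    by move=> b [l]; rewrite leqn0 => /eqP->; rewrite f0 => -[->]; left.
  by apply/seteqP; split=> // b [l]; rewrite leqn0 => /eqP->; rewrite f0.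
have rangeS b : prefix_range f k.+1 b -> prefix_range f k b \/ f k.+1 = Some b.
  by case=> l; rewrite leq_eqVlt ltnS => /orP[/eqP->|lk] fl; [right|left; exists l].
have range_sub : prefix_range f k `<=` prefix_range f k.+1.
  by move=> b [l lk fl]; exists l => //; apply: leqW.
case fk: (f k.+1) => [c|]; last first.
  case: IH => [S0|[m Sm maxm]]; [left|right; exists m; [exact: range_sub|]].
    by apply/seteqP; split=> // b /rangeS[|]; [rewrite S0|rewrite fk].
  by move=> b /rangeS[/maxm//|]; rewrite fk.
have Sc : prefix_range f k.+1 c by exists k.+1.
case: IH => [S0|[m Sm maxm]].
  by right; exists c => // b /rangeS[|]; [rewrite S0|rewrite fk => -[->]; left].
have [mc|cm] : lt m c \/ c = m \/ lt c m by case: (lt_total m c) => [|[]]; auto.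
  right; exists c => // b /rangeS[/maxm[->|bm]|]; [by right| |by rewrite fk => -[->]; left].
  by right; exact: lt_trans bm mc.
right; exists m; first exact: range_sub.
by move=> b /rangeS[/maxm//|]; rewrite fk => -[<-].
Qed.

End StrictTotalOrder.

Section WellFoundedChoice.
Variables (W T : Type) (lt : W -> W -> Prop) (t0 : T).
Hypotheses (lt_wf : well_founded lt) (lt_trans : forall x y z, lt x y -> lt y z -> lt x z).
Variable P : W -> (W -> T) -> T -> Prop.
Hypothesis P_local : forall a h h' t, (forall b, lt b a -> h b = h' b) -> P a h t -> P a h' t.
Hypothesis P_step : forall a h, (forall b, lt b a -> P b h (h b)) -> exists t, P a h t.

Let pick (Q : T -> Prop) : T :=
  if pselect (exists t, Q t) is left ex then projT1 (cid ex) else t0.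

Let pickP (Q : T -> Prop) : (exists t, Q t) -> Q (pick Q).
Proof. by rewrite /pick; case: pselect => // ex _; case: (cid ex). Qed.

Let extend a (h : forall b, lt b a -> T) (b : W) : T :=
  if pselect (lt b a) is left ba then h b ba else t0.

Lemma wf_choice : exists f : W -> T, forall a, P a f (f a).
Proof.
pose F a h := pick (P a (@extend a h)).
pose f := Fix lt_wf (fun _ => T) F.
have fE a : f a = F a (fun b _ => f b).
  rewrite /f Fix_eq // => x h h' hh'; congr pick; congr P.
  by apply: funext => b; rewrite /extend; case: pselect.
exists f => a; elim/(well_founded_ind lt_wf): a => a IH.
set h := extend (fun b (_ : lt b a) => f b).
have hf b : lt b a -> h b = f b by move=> ba; rewrite /h /extend; case: pselect.
suff : P a h (f a) by apply: P_local.
rewrite fE /F -/h; apply: pickP; apply: P_step => b ba; rewrite hf //.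
apply: P_local (IH b ba) => c cb; rewrite hf //; exact: lt_trans cb ba.
Qed.

End WellFoundedChoice.

Section Omega1.
Variables (W : Type) (lt : W -> W -> Prop) (Hw : is_omega1 lt).

Lemma bounded_of_countable (Y : set W) : countable Y -> exists a, forall y, Y y -> lt y a.
Proof.
move=> cY; set U := Y `|` \bigcup_(y in Y) [set x | lt x y].
have cU : countable U.
  apply: countable_setU => //; apply: bigcup_countable => // y _.
  exact: o1_segments_countable Hw y.
have [a Ua] : exists a, ~ U a.
  apply: contrapT => allU; apply: (o1_uncountable Hw); apply: sub_countable cU.
  by apply: subset_card_le => x _; apply: contrapT => Ux; apply: allU; exists x.
exists a => y Yy; case: (o1_total Hw y a) => [//|[ya|ay]]; case: Ua.
  by left; rewrite -ya.
by right; exists y.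
Qed.

Lemma stationary_uncountable (S : set W) : stationary lt S -> ~ countable S.
Proof.
move=> statS cS; have [a Sa] := bounded_of_countable cS.
have [x [Sx ax]] : exists x, S x /\ lt a x.
  apply: statS; split.
    move=> d [[b bd] _] cof; have [g [ag [_ gd]]] := cof b bd; exact: (o1_trans Hw) ag gd.
  move=> b; have [c Hc] := bounded_of_countable (finite_set_countable (finite_set2 a b)).
  by exists c; split; apply: Hc; [left|right].
by case: (o1_irrefl Hw (o1_trans Hw ax (Sa x Sx))).
Qed.

End Omega1.

Definition ladder_system W (lt : W -> W -> Prop) (Cseq : W -> set W) : Prop :=
  forall d, is_limit lt d ->
    [/\ Cseq d `<=` [set x | lt x d], order_type_omega lt (Cseq d) &
        (forall b, lt b d -> exists g, Cseq d g /\ lt b g)].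

(* The colours of a stage, its traces (see the header) and an infinite set,
   almost disjoint from every colour, reserved for later stages. *)
Record stage := Stage { fam : nat -> set nat; trace : nat -> set nat; room : set nat }.

Section Stages.
Variables (W : Type) (lt : W -> W -> Prop) (n : nat) (Cseq : W -> set W).

Fixpoint iter_limit (r : nat) (b : W) : Prop :=
  if r is r'.+1 then is_limit lt b /\ forall c, Cseq b c -> iter_limit r' c else True.

Definition stage_ok (b : W) (s : stage) : Prop :=
  [/\ forall j j', (j < n)%N -> (j' < n)%N -> j != j' -> finite_set (fam s j `&` fam s j'),
      forall r, (r < n)%N -> trace s r `<=` fam s r,
      forall r, (r < n)%N -> iter_limit r b -> infinite_set (trace s r),
      infinite_set (room s) &
      forall j, (j < n)%N -> finite_set (fam s j `&` room s)].

Definition stage_lt (s t : stage) : Prop :=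
  [/\ forall j, (j < n)%N -> finite_set (fam s j `\` fam t j),
      forall j, (j < n)%N -> infinite_set (fam t j `\` fam s j),
      forall j j', (j < n)%N -> (j' < n)%N -> j != j' -> finite_set (fam t j `&` fam s j'),
      forall r j, (r < n)%N -> (j < n)%N -> finite_set (trace t r `&` fam s j) &
      forall j, (j < n)%N -> finite_set (fam s j `&` room t)].

Definition stage_spec (a : W) (h : W -> stage) (s : stage) : Prop :=
  [/\ stage_ok a s, forall b, lt b a -> stage_lt (h b) s &
      is_limit lt a -> forall r, (0 < r < n)%N ->
        trace s r `<=` \bigcup_(b in Cseq a) trace (h b) r.-1].

End Stages.

Section NextStage.
Variables (W : Type) (lt : W -> W -> Prop) (Hw : is_omega1 lt).
Variables (n : nat) (Cseq : W -> set W) (HC : ladder_system lt Cseq).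
Variables (a : W) (h : W -> stage).
Hypothesis h_ok : forall b, lt b a -> stage_ok lt n Cseq b (h b).
Hypothesis h_lt : forall b c, lt c b -> lt b a -> stage_lt n (h c) (h b).

Lemma fam_pred_disjoint b c j j' : lt b a -> lt c a ->
  (j < n)%N -> (j' < n)%N -> j != j' -> finite_set (fam (h b) j `&` fam (h c) j').
Proof.
move=> ba ca jn j'n jj'; case: (o1_total Hw b c) => [bc|[<-|cb]].
- by have [_ _ + _ _] := h_lt bc ca; rewrite setIC; apply; rewrite // eq_sym.
- by have [+ _ _ _ _] := h_ok ba; apply.
- by have [_ _ + _ _] := h_lt cb ba; apply.
Qed.

Section Enumeration.
Variable e : nat -> option W.
Hypothesis e_enum : forall b, lt b a <-> exists k, e k = Some b.

Let listed := prefix_range e.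

Lemma listed_lt k b : listed k b -> lt b a.
Proof. by case=> l _ el; apply/e_enum; exists l. Qed.

Lemma listed_eventually b : lt b a -> exists l, forall k, (l <= k)%N -> listed k b.
Proof. by move=> /e_enum[l el]; exists l => k lk; exists l. Qed.

Let used k := \bigcup_(b in listed k) \bigcup_(j in `I_n) fam (h b) j.

Lemma infinite_unused k : infinite_set (~` used k).
Proof.
case: (prefix_range_max (o1_trans Hw) (o1_total Hw) e k) => [listed0|[m Lm maxm]].
  by apply: (sub_infinite_set _ infinite_nat) => x _ [b]; rewrite /listed listed0.
have [_ _ _ room_inf room_fin] := h_ok (listed_lt Lm).
have fin : finite_set (used k `&` room (h m)).
  rewrite setI_bigcupl; apply: bigcup_finite => [|b Lb]; first exact: finite_prefix_range a k.
  rewrite setI_bigcupl; apply: bigcup_finite => [|j jn]; first exact: finite_II.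
  have [->|bm] := maxm b Lb; first exact: room_fin.
  by have [_ _ _ _] := h_lt bm (listed_lt Lm); apply.
apply: sub_infinite_set (infinite_setD room_inf fin) => x [rx nux] ux; exact: nux.
Qed.

Section Thread.
Variable xs : nat -> nat.
Hypotheses (xs_incr : forall k, (xs k < xs k.+1)%N) (xs_unused : forall k, ~ used k (xs k)).

Let fresh := range xs.
(* Pieces j < n make colour j grow strictly; piece n is the new room. *)
Let fresh_part j := xs @` [set k | k %% n.+1 = j].

Let xs_mono : {homo xs : k l / (k < l)%N}.
Proof. exact: homo_ltn ltn_trans xs_incr. Qed.

Let xs_ge k : (k <= xs k)%N.
Proof. by elim: k => // k IH; apply: leq_ltn_trans IH (xs_incr k). Qed.

Lemma fresh_fam_finite b j : lt b a -> (j < n)%N -> finite_set (fresh `&` fam (h b) j).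
Proof.
move=> ba jn; have [l Ll] := listed_eventually ba; apply/finite_natP; exists (xs l).
move=> _ [[k _ <-] bk]; apply: xs_mono; rewrite ltnNge; apply/negP => lk.
by apply: (xs_unused (k:=k)); exists b; [exact: Ll|exists j].
Qed.

Lemma fresh_part_infinite j : (j <= n)%N -> infinite_set (fresh_part j).
Proof.
move=> jn; apply/infinite_natP => K; exists (xs (K * n.+1 + j)).
  by exists (K * n.+1 + j) => //=; rewrite modnMDl modn_small.
have := xs_ge (K * n.+1 + j); nia.
Qed.

Lemma fresh_part_sub j : fresh_part j `<=` fresh.
Proof. by move=> _ [k _ <-]; exists k. Qed.

Lemma fresh_part_disjoint j j' x : j != j' -> fresh_part j x -> fresh_part j' x -> False.
Proof.
move=> + [k kj <-] [k' k'j /(incn_inj (leq_mono xs_mono)) k'k].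
by rewrite -kj -k'j k'k eqxx.
Qed.

Section Ladder.
Variable g : nat -> W.
Hypothesis g_ladder :
  is_limit lt a -> {homo g : m k / (m < k)%N >-> lt m k} /\ Cseq a = range g.

Lemma g_Cseq m : is_limit lt a -> Cseq a (g m).
Proof. by case/g_ladder => _ ->; exists m. Qed.

Lemma g_lt m : is_limit lt a -> lt (g m) a.
Proof. by move=> la; have [+ _ _] := HC la; apply; exact: g_Cseq. Qed.

Lemma g_cofinal b : is_limit lt a -> lt b a ->
  exists M, forall m, (M <= m)%N -> lt b (g m).
Proof.
move=> la ba; have [_ _ /(_ b ba)[c [+ bc]]] := HC la.
have [g_mono ->] := g_ladder la; case=> M _ gMc; rewrite -gMc in bc.
exists M => m; rewrite leq_eqVlt => /orP[/eqP<-//|Mm].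
exact (o1_trans Hw bc (g_mono M m Mm)).
Qed.

Let forbidden m := [set b | lt b (g m) /\ (listed m `|` g @` `I_m) b].

(* Avoiding the finitely
   many forbidden sets makes the chosen points almost disjoint from every
   predecessor and lets points chosen for distinct r never coincide. *)
Let admissible r m x := [/\ trace (h (g m)) r.-1 x, (m <= x)%N, ~ fresh x,
  forall b j, forbidden m b -> (j < n)%N -> ~ fam (h b) j x &
  forall j, (j < n)%N -> j != r.-1 -> ~ fam (h (g m)) j x].

Lemma admissible_exists r m : is_limit lt a -> (0 < r < n)%N ->
  iter_limit lt Cseq r.-1 (g m) -> exists x, admissible r m x.
Proof.
move=> la /andP[r0 rn] lim_gm.
have gma := g_lt m la; have r'n : (r.-1 < n)%N by lia.
have [ok_disj ok_trace ok_inf _ _] := h_ok gma.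
set P := trace (h (g m)) r.-1.
have PA : P `<=` fam (h (g m)) r.-1 := ok_trace _ r'n.
set B := fresh `|` \bigcup_(b in forbidden m) \bigcup_(j in `I_n) fam (h b) j
          `|` \bigcup_(j in `I_n `\ r.-1) fam (h (g m)) j.
have finPB : finite_set (P `&` B).
  rewrite !setIUr !finite_setU; split; [split|].
  - rewrite setIC; apply: sub_finite_set (fresh_fam_finite gma r'n) => x [frx Px].
    by split=> //; exact: PA.
  - rewrite setI_bigcupr; apply: bigcup_finite => [|b [bgm _]].
      have forb_sub : forbidden m `<=` listed m `|` g @` `I_m by move=> b [].
      apply: sub_finite_set forb_sub _; rewrite finite_setU.
      by split; [exact: finite_prefix_range a m|exact/finite_image/finite_II].
    rewrite setI_bigcupr; apply: bigcup_finite => [|j jn]; first exact: finite_II.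
    by have [_ _ _ + _] := h_lt bgm gma; apply.
  - rewrite setI_bigcupr; apply: bigcup_finite => [|j [jn jr]]; first exact/finite_setD/finite_II.
    apply: sub_finite_set (ok_disj _ _ r'n jn _) => [x [Px Ajx]|]; first by split=> //; exact: PA.
    by apply/eqP => rj; apply: jr; rewrite rj.
have infPB := infinite_setD (ok_inf _ r'n lim_gm) finPB.
have [x [Px nBx] mx] := (infinite_natP _).1 infPB m.
exists x; split=> //.
- by move=> frx; apply: nBx; split=> //; do 2 left.
- by move=> b j fb jn Ax; apply: nBx; split=> //; left; right; exists b => //; exists j.
- by move=> j jn jr Ax; apply: nBx; split=> //; right; exists j => //; split=> //; apply/eqP.
Qed.

Let pick r m := xget 0%N (admissible r m).

Let pickP r m : (exists x, admissible r m x) -> admissible r m (pick r m).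
Proof. exact: xgetPex. Qed.

Let ladder_pts r := [set x | [/\ is_limit lt a, (0 < r < n)%N &
                        exists2 m, admissible r m x & x = pick r m]].

Lemma ladder_pts_infinite r : (0 < r < n)%N -> iter_limit lt Cseq r a ->
  infinite_set (ladder_pts r).
Proof.
case: r => [//|r] rn [la lim_C]; apply/infinite_natP => K.
have adm : admissible r.+1 K (pick r.+1 K).
  by apply: pickP; apply: admissible_exists => //; apply: lim_C; exact: g_Cseq.
by exists (pick r.+1 K); [split=> //; exists K|case: adm].
Qed.

Lemma ladder_pts_fresh r x : ladder_pts r x -> ~ fresh x.
Proof. by case=> _ _ [m [_ _ + _ _] _]. Qed.

Lemma ladder_pts_trace r x : ladder_pts r x -> exists2 b, Cseq a b & trace (h b) r.-1 x.
Proof. by case=> la _ [m [Px _ _ _ _] _]; exists (g m); [exact: g_Cseq|]. Qed.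

Lemma ladder_pts_disjoint r r' x : ladder_pts r x -> ladder_pts r' x -> r = r'.
Proof.
move=> [la /andP[r0 rn] [m [Pm _ _ forb_m other_m] _]].
move=> [_ /andP[r0' r'n] [m' [Pm' _ _ forb_m' other_m'] _]].
apply: contrapT => rr'.
have fam_m : fam (h (g m)) r.-1 x.
  by have [_ + _ _ _] := h_ok (g_lt m la); apply=> //; lia.
have fam_m' : fam (h (g m')) r'.-1 x.
  by have [_ + _ _ _] := h_ok (g_lt m' la); apply=> //; lia.
have [g_mono _] := g_ladder la.
case: (ltngtP m m') => [mm'|m'm|mm'].
- by apply: (forb_m' (g m) r.-1) => //; [split; [exact: g_mono|right; exists m]|lia].
- by apply: (forb_m (g m') r'.-1) => //; [split; [exact: g_mono|right; exists m']|lia].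
- by apply: (other_m' r.-1) => //; [lia|apply/eqP; lia|rewrite -mm'].
Qed.

Lemma ladder_pts_fam_finite r b j : lt b a -> (j < n)%N ->
  finite_set (ladder_pts r `&` fam (h b) j).
Proof.
move=> ba jn; have [la|nla] := pselect (is_limit lt a); last first.
  by apply: sub_finite_set (finite_set0 nat) => x [[]].
have [l Ll] := listed_eventually ba; have [M bgM] := g_cofinal la ba.
apply: sub_finite_set (finite_image (pick r) (finite_II (maxn l M))).
move=> x [[_ _ [m [_ _ _ forb _] ex]] bx]; exists m; last by rewrite ex.
rewrite /= ltnNge; apply/negP => lMm; apply: (forb b j) => //.
by split; [apply: bgM; lia|left; apply: Ll; lia].
Qed.

Let clash j k := \bigcup_(b in listed k) \bigcup_(j' in `I_n `\ j) fam (h b) j'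
                 `|` fresh `|` \bigcup_(r in `I_n `\ j) ladder_pts r.

(* A point of colour j of the k-th listed predecessor is inherited unless it
   clashes with a different colour of the first k listed ones or with the new
   points; this makes inherited colours disjoint while losing only finitely
   much of each predecessor. *)
Let inherited j := [set x | exists k b, [/\ e k = Some b, fam (h b) j x & ~ clash j k x]].

Lemma clash_finite j k b : (j < n)%N -> e k = Some b ->
  finite_set (fam (h b) j `&` clash j k).
Proof.
move=> jn ek; have ba : lt b a by apply/e_enum; exists k.
rewrite !setIUr !finite_setU; split; [split|].
- rewrite setI_bigcupr; apply: bigcup_finite => [|c Lc]; first exact: finite_prefix_range a k.
  rewrite setI_bigcupr; apply: bigcup_finite => [|j' [j'n jj']]; first exact/finite_setD/finite_II.
  apply: fam_pred_disjoint => //; first exact: listed_lt Lc.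
  by apply/eqP => jj; apply: jj'; rewrite jj.
- by rewrite setIC; exact: fresh_fam_finite.
- rewrite setI_bigcupr; apply: bigcup_finite => [|r _]; first exact/finite_setD/finite_II.
  by rewrite setIC; exact: ladder_pts_fam_finite.
Qed.

Lemma inherited_disjoint j j' x : (j < n)%N -> (j' < n)%N -> j != j' ->
  inherited j x -> inherited j' x -> False.
Proof.
move=> jn j'n /eqP jj' [k [b [ek bx ncl]]] [k' [b' [ek' b'x ncl']]].
have [kk'|k'k] := leqP k k'.
  by apply: ncl'; left; left; exists b; [exists k|exists j => //; split=> // /jj'].
apply: ncl; left; left; exists b'; first by exists k' => //; exact: ltnW.
by exists j' => //; split=> // /esym /jj'.
Qed.

Lemma inherited_fresh j x : inherited j x -> ~ fresh x.
Proof. by move=> [k [b [_ _ +]]] frx; apply; left; right. Qed.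

Lemma inherited_ladder_pts j r x : (r < n)%N -> r != j ->
  inherited j x -> ~ ladder_pts r x.
Proof. by move=> rn /eqP rj [k [b [_ _ +]]] Qx; apply; right; exists r. Qed.

Lemma fam_inherited_finite b j : lt b a -> (j < n)%N ->
  finite_set (fam (h b) j `\` inherited j).
Proof.
move=> /e_enum[k ek] jn; apply: sub_finite_set (clash_finite jn ek) => x [bx ninh].
by split=> //; apply: contrapT => ncl; apply: ninh; exists k, b.
Qed.

Lemma inherited_fam_finite j j' b : (j < n)%N -> (j' < n)%N -> j != j' -> lt b a ->
  finite_set (inherited j `&` fam (h b) j').
Proof.
move=> jn j'n /eqP jj' ba; have /e_enum[l el] := ba.
have : finite_set (\bigcup_(c in listed l) (fam (h c) j `&` fam (h b) j')).
  apply: bigcup_finite => [|c Lc]; first exact: finite_prefix_range a l.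
  by apply: fam_pred_disjoint => //; [exact: listed_lt Lc|apply/eqP].
apply: sub_finite_set => x [[k [c [ek cx ncl]]] bx]; exists c; last by split.
exists k => //; rewrite leqNgt; apply/negP => lk; apply: ncl; left; left.
by exists b; [exists l => //; exact: ltnW|exists j' => //; split=> // /esym /jj'].
Qed.

Let next_stage := Stage (fun j => inherited j `|` fresh_part j `|` ladder_pts j)
                        (fun r => if r is 0 then fresh_part 0 else ladder_pts r) (fresh_part n).

Lemma next_fam_disjoint j j' x : (j < n)%N -> (j' < n)%N -> j != j' ->
  fam next_stage j x -> fam next_stage j' x -> False.
Proof.
move=> jn j'n jj' [[I|P]|R] [[I'|P']|R'].
- exact: inherited_disjoint I I'.
- exact: inherited_fresh I (fresh_part_sub P').
- by apply: (inherited_ladder_pts j'n _ I R'); rewrite eq_sym.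
- exact: inherited_fresh I' (fresh_part_sub P).
- exact: fresh_part_disjoint jj' P P'.
- exact: ladder_pts_fresh R' (fresh_part_sub P).
- exact: inherited_ladder_pts jn jj' I' R.
- exact: ladder_pts_fresh R (fresh_part_sub P').
- by move: jj'; rewrite (ladder_pts_disjoint R R') eqxx.
Qed.

Lemma next_stage_ok : stage_ok lt n Cseq a next_stage.
Proof.
split.
- move=> j j' jn j'n jj'; apply: sub_finite_set (finite_set0 nat) => x [].
  exact: next_fam_disjoint.
- by case=> [|r] rn x /= Px; [left; right|right].
- by case=> [|r] rn lim /=; [exact: fresh_part_infinite|exact: ladder_pts_infinite].
- exact: fresh_part_infinite.
- move=> j jn; apply: sub_finite_set (finite_set0 nat) => x [[[I|P]|R] Pn].
  + exact: inherited_fresh I (fresh_part_sub Pn).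
  + by apply: fresh_part_disjoint P Pn; rewrite neq_ltn jn.
  + exact: ladder_pts_fresh R (fresh_part_sub Pn).
Qed.

Lemma next_stage_above b : lt b a -> stage_lt n (h b) next_stage.
Proof.
move=> ba; have fresh_part_fam_finite j j' : (j' < n)%N ->
    finite_set (fresh_part j `&` fam (h b) j').
  by move=> j'n; apply: sub_finite_set (fresh_fam_finite ba j'n) => x [/fresh_part_sub].
split.
- move=> j jn; apply: sub_finite_set (fam_inherited_finite ba jn) => x [bx nnx].
  by split=> // Ix; apply: nnx; do 2 left.
- move=> j jn; have := fresh_part_fam_finite j j jn.
  move=> /(infinite_setD (fresh_part_infinite (ltnW jn))); apply: sub_infinite_set.
  by move=> x [Px nXb]; split=> [|bx]; [left; right|exact: nXb].
- move=> j j' jn j'n jj'; rewrite !setIUl !finite_setU.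
  split; [split|exact: ladder_pts_fam_finite].
    exact: inherited_fam_finite.
  exact: fresh_part_fam_finite.
- by case=> [|r] j rn jn /=; [exact: fresh_part_fam_finite|exact: ladder_pts_fam_finite].
- by move=> j jn; rewrite setIC; exact: fresh_part_fam_finite.
Qed.

Lemma next_stage_spec : stage_spec lt n Cseq a h next_stage.
Proof.
split; [exact: next_stage_ok|exact: next_stage_above|].
by move=> la [//|r] _ x /= /ladder_pts_trace.
Qed.

End Ladder.
End Thread.

Lemma next_stage_exists_enum : exists s, stage_spec lt n Cseq a h s.
Proof.
have [xs [xs_incr xs_unused]] := increasing_avoiding infinite_unused.
have [g g_ladder] : exists g : nat -> W,
    is_limit lt a -> {homo g : m k / (m < k)%N >-> lt m k} /\ Cseq a = range g.
  have [la|nla] := pselect (is_limit lt a); last by exists (fun=> a).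
  by have [_ [g [g_mono ->]] _] := HC la; exists g.
by eexists; exact: (next_stage_spec xs_incr xs_unused g_ladder).
Qed.

End Enumeration.

Lemma next_stage_exists : exists s, stage_spec lt n Cseq a h s.
Proof.
have [e e_enum] := countable_enum (o1_segments_countable Hw a).
exact: next_stage_exists_enum e_enum.
Qed.

End NextStage.

Lemma stages_exist W (lt : W -> W -> Prop) (Hw : is_omega1 lt) (n : nat)
    (Cseq : W -> set W) (HC : ladder_system lt Cseq) :
  exists R : W -> stage, forall a, stage_spec lt n Cseq a R (R a).
Proof.
apply: (wf_choice (Stage (fun=> set0) (fun=> set0) set0) (o1_wf Hw) (o1_trans Hw)).
- move=> a h h' s hh' [ok above from_ladder]; split=> // [b ba|la r rn x].
    by rewrite -hh' //; exact: above.
  move=> /(from_ladder la r rn)[b Cb tb]; exists b => //.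
  by rewrite -hh' //; have [+ _ _] := HC _ la; apply.
- move=> a h spec_below; apply: next_stage_exists => // [b ba|b c cb ba].
    by have [] := spec_below b ba.
  by have [_ + _] := spec_below b ba; apply.
Qed.

Section Gap.
Variables (W : Type) (lt : W -> W -> Prop) (Hw : is_omega1 lt).
Variables (n : nat) (Cseq : W -> set W) (R : W -> stage).
Hypothesis R_spec : forall a, stage_spec lt n Cseq a R (R a).

Let L (i : 'I_n) := range (fun a => fam (R a) i).

Let R_ok a : stage_ok lt n Cseq a (R a).
Proof. by case: (R_spec a). Qed.

Let R_lt b a : lt b a -> stage_lt n (R b) (R a).
Proof. by case: (R_spec a) => _ + _; apply. Qed.

Lemma stages_pregap : pregap L.
Proof.
move=> i j _ _ ij [a _ <-] [b _ <-]; case: (o1_total Hw a b) => [ab|[<-|ba]].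
- by have [_ _ + _ _] := R_lt ab; rewrite setIC; apply; rewrite // eq_sym.
- by have [+ _ _ _ _] := R_ok a; apply.
- by have [_ _ + _ _] := R_lt ba; apply.
Qed.

Lemma stages_order_iso (i : 'I_n) : order_iso_star lt (L i).
Proof.
exists (fun a => fam (R a) i); split; first by move=> a; exists a.
split; first by move=> A [a _ <-]; exists a.
move=> a b; split=> [[ab|<-]|sub].
- by have [+ _ _ _ _] := R_lt ab; apply.
- by rewrite /subset_star setDv; exact: finite_set0.
- case: (o1_total Hw a b) => [|[|ba]]; [by left|by right|].
  by have [_ + _ _ _] := R_lt ba; move/(_ i (ltn_ord i)).
Qed.

Section Separation.
Hypothesis guess : forall S : set W, ~ countable S ->
  stationary lt [set d | is_limit lt d /\ Cseq d `<=` S].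
Variable c : 'I_n -> set nat.
Hypothesis c_sep : forall i A, L i A -> subset_star A (c i).

Let in_separators r x := forall i : 'I_n, (i <= r)%N -> c i x.
Let trace_separated r K a := forall x, trace (R a) r x -> (K <= x)%N -> in_separators r x.

Let trace_in_separator a (i : 'I_n) : exists K, forall x, trace (R a) i x -> (K <= x)%N -> c i x.
Proof.
have /finite_natP[K Kc] : finite_set (fam (R a) i `\` c i).
  exact: (c_sep (ex_intro2 _ _ a I erefl)).
exists K => x tx Kx; apply: contrapT => ncx.
have [_ + _ _ _] := R_ok a; move/(_ i (ltn_ord i) x tx) => fx.
by have := Kc x (conj fx ncx); lia.
Qed.

Lemma trace_separated_uncountable r : (r < n)%N ->
  exists K, ~ countable [set a | trace_separated r K a /\ iter_limit lt Cseq r a].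
Proof.
elim: r => [n0|r IH rn].
  apply: uncountable_pigeonhole (o1_uncountable Hw) _ => a _.
  have [K Kc] := trace_in_separator a (Ordinal n0); exists K => //; split=> // x tx Kx i.
  rewrite leqn0 => /eqP i0; have -> : i = Ordinal n0 by apply: val_inj.
  exact: Kc.
have [K uncT] := IH (ltnW rn).
apply: uncountable_pigeonhole (stationary_uncountable Hw (guess uncT)) _ => d [ld CT].
have [K1 K1c] := trace_in_separator d (Ordinal rn).
exists (maxn K K1) => //; split; last by split=> // b /CT[].
move=> x tx Kx i; rewrite leq_eqVlt ltnS => /orP[/eqP ir|ir].
  have -> : i = Ordinal rn by apply: val_inj.
  by apply: K1c tx _; lia.
have [_ _ /(_ ld r.+1 rn x tx)[b Cb tb]] := R_spec d.
by have [sep_b _] := CT b Cb; apply: sep_b tb _ i ir; lia.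
Qed.

Lemma separator_cap_infinite : (0 < n)%N -> infinite_set (\bigcap_(i in [set: 'I_n]) c i).
Proof.
move=> n0; have n1 : (n.-1 < n)%N by rewrite prednK.
have [K uncK] := trace_separated_uncountable n1.
have [a [ga la]] : exists a, trace_separated n.-1 K a /\ iter_limit lt Cseq n.-1 a.
  apply: contrapT => none; apply: uncK; apply: sub_countable (countable0 W).
  by apply: subset_card_le => a Ha; apply: none; exists a.
have [_ _ tinf _ _] := R_ok a.
apply: sub_infinite_set (infinite_setD (tinf _ n1 la) (finite_II K)).
move=> x [tx Kx] i _; have Kx' : (K <= x)%N by rewrite leqNgt; apply/negP.
have iN : (i <= n.-1)%N by rewrite -ltnS prednK.
exact (ga x tx Kx' i iN).
Qed.

End Separation.
End Gap.

Unset Implicit Arguments.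
Theorem mainTheorem6 (W : Type) (lt : W -> W -> Prop) :
  is_omega1 lt -> clubsuit lt ->
  forall n : nat, (2 <= n)%N ->
    exists L : 'I_n -> set (set nat),
      ngap L /\ forall i : 'I_n, order_iso_star lt (L i).
Proof.
move=> Hw [Cseq [HC guess]] n n2.
have [R R_spec] := stages_exist Hw n HC.
exists (fun i => range (fun a => fam (R a) i)).
split; last exact (stages_order_iso Hw R_spec).
split; first exact (stages_pregap Hw R_spec).
case=> c [c_sep]; apply: (separator_cap_infinite Hw R_spec guess c_sep).
exact: leq_trans n2.
Qed.
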